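(* Every Ehrhart fan is balanced: if $\Sigma$ is an Ehrhart fan of dimension $d$, then for every $\tau\in\Sigma(d-1)$, \[ \sum_{\sigma\in\Sigma(d),\ \tau\subseteq\sigma}u_{\sigma(1)\setminus\tau(1)}\in\mathrm{span}_\mathbb{R}(\tau), \] where $u_{\sigma(1)\setminus\tau(1)}$ denotes the primitive generator of the unique ray of $\sigma$ not in $\tau$.
   Context: $N$ is a free abelian group, $N_\mathbb{R}=N\otimes\mathbb{R}$, $M=\mathrm{Hom}(N,\mathbb{Z})$ viewed as integral linear functions. $\Sigma(k)$ denotes the set of $k$-dimensional cones of a fan $\Sigma$. A fan is unimodular if it contains the origin and for each cone the primitive ray generators $u_\rho\in N$ extend to a $\mathbb{Z}$-basis of $N$. $\mathrm{PL}(\Sigma)$: functions on $|\Sigma|$ agreeing on each cone with some element of $M$; $\underline{\mathrm{PL}}(\Sigma)$ its quotient by restrictions of elements of $M$. Courant function $\delta_\rho$: $1$ at $u_\rho$, $0$ at other ray generators. Star fan $\Sigma^\sigma$: image in $N_\mathbb{R}/\mathrm{span}(\sigma)$ (lattice $N/\mathrm{Span}_\mathbb{Z}(\sigma\cap N)$) of all cones that are faces of cones containing $\sigma$; $[f]^\sigma$ is the class of the function induced by $f-m$, $m\in M$ agreeing with $f$ on $\sigma$. A unimodular fan $\Sigma$ is Ehrhart (recursively on dimension) if (1) $\Sigma^\rho$ is Ehrhart for every ray $\rho$, and (2) there is $\chi_\Sigma:\underline{\mathrm{PL}}(\Sigma)\to\mathbb{Z}$ with $\chi_\Sigma(0)=1$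 and $\chi_\Sigma([f])=\chi_\Sigma([f-\delta_\rho])+\chi_{\Sigma^\rho}([f]^\rho)$ for all $f\in\mathrm{PL}(\Sigma)$, $\rho\in\Sigma(1)$. Zero-dimensional fans are Ehrhart with $\chi=1$. *)

(* A unimodular fan in N = Z^n is encoded by its finite set of
   cones, each cone being given by the finite set of primitive generators of its
   rays (a unimodular cone is simplicial, so this determines it). *)
From HB Require Import structures.
From mathcomp Require Import all_boot all_order all_algebra.
From mathcomp Require Import finmap.
From mathcomp Require Import reals.
Set Implicit Arguments. Unset Strict Implicit. Unset Printing Implicit Defensive.
Import Order.TTheory GRing.Theory Num.Theory.
Local Open Scope ring_scope.
Local Open Scope fset_scope.

Section Fans.
Variables (R : realType) (n : nat).

Local Notation vec := 'rV[int]_n.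
Local Notation cone := {fset vec}.
Local Notation fan := {fset {fset vec}}.

Definition toR (u : vec) : 'rV[R]_n := map_mx (fun z : int => z%:~R) u.

(* pairing of m in M = Hom(N,Z) (written in coordinates) with x in N_R *)
Definition pairZ (m : vec) (x : 'rV[R]_n) : R := \sum_i (m 0 i)%:~R * x 0 i.

Definition in_cone (C : cone) (x : 'rV[R]_n) : Prop :=
  exists a : vec -> R, (forall u, 0 <= a u) /\ x = \sum_(u <- C) a u *: toR u.

Definition in_span (C : cone) (x : 'rV[R]_n) : Prop :=
  exists a : vec -> R, x = \sum_(u <- C) a u *: toR u.

(* unimodular fan: contains the origin (empty cone), closed under faces,
   two cones meet in a common face, and the generators of every cone extend
   to a Z-basis of N (rows of a unimodular integer matrix) *)
Definition unimodular_fan (S : fan) : Prop :=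
  [/\ fset0 \in S,
      (forall C D : cone, C \in S -> D `<=` C -> D \in S),
      (forall C D : cone, C \in S -> D \in S ->
         forall x, in_cone C x -> in_cone D x -> in_cone (C `&` D) x) &
      (forall C : cone, C \in S -> exists B : 'M[int]_n,
         B \in unitmx /\ forall u, u \in C -> exists i, row i B = u)].

Definition fan_dim (S : fan) (d : nat) : Prop :=
  (exists2 C, C \in S & #|` C| = d) /\ (forall C, C \in S -> (#|` C| <= d)%N).

(* The star fan S^T (T \in S) lives in N_R / span(T) with
   lattice N / Span_Z(T).  We represent it through pull-backs to N_R:
   - its cones are the images of the cones C \in S with T `<=` C;
   - its rays are the images of the u \notin T with T `|` [fset u] \in S;
   - integral linear functions on N / Span_Z(T) are the m \in M vanishing on T;
   - a function on its support is pulled back to a function on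
     the union of the sets cone(C) + span(T), C \in S, T `<=` C. ----- *)

Definition star_support (S : fan) (T : cone) (x : 'rV[R]_n) : Prop :=
  exists C, [/\ C \in S, T `<=` C &
    exists y z, [/\ in_cone C y, in_span T z & x = (y + z)%R]].

Definition vanishes_on (m : vec) (T : cone) : Prop :=
  forall s, s \in T -> pairZ m (toR s) = 0.

Definition isPL (S : fan) (T : cone) (g : 'rV[R]_n -> R) : Prop :=
  forall C, C \in S -> T `<=` C ->
    exists m : vec, vanishes_on m T /\
      forall y z, in_cone C y -> in_span T z -> g (y + z)%R = pairZ m (y + z)%R.

(* equality in the quotient \underline{PL}(S^T) = PL(S^T) / M(S^T) *)
Definition PL_equiv (S : fan) (T : cone) (g g' : 'rV[R]_n -> R) : Prop :=
  exists m : vec, vanishes_on m T /\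
    forall x, star_support S T x -> g x - g' x = pairZ m x.

Definition is_ray (S : fan) (T : cone) (u : vec) : Prop :=
  u \notin T /\ T `|` [fset u] \in S.

Definition is_courant (S : fan) (T : cone) (u : vec) (delta : 'rV[R]_n -> R) :=
  [/\ isPL S T delta, delta (toR u) = 1 &
      forall v, is_ray S T v -> v != u -> delta (toR v) = 0].

(* h represents [g]^u : the class, in PL((S^T)^u) = PL(S^(T u {u})), of the
   function induced by g - m, where m is integral linear on N/Span_Z(T)
   agreeing with g on the ray u *)
Definition is_star_restriction (S : fan) (T : cone) (u : vec)
    (g h : 'rV[R]_n -> R) : Prop :=
  isPL S (T `|` [fset u]) h /\
  exists m : vec, [/\ vanishes_on m T, pairZ m (toR u) = g (toR u) &
    forall C, C \in S -> T `|` [fset u] `<=` C ->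
      forall x, in_cone C x -> h x = g x - pairZ m x].

Definition chi_axioms (S : fan) (T : cone)
    (chiT : ('rV[R]_n -> R) -> int) (chi_star : vec -> ('rV[R]_n -> R) -> int)
    : Prop :=
  [/\ (* chi_T is a function on \underline{PL}(S^T) *)
      (forall g g', isPL S T g -> isPL S T g' -> PL_equiv S T g g' ->
         chiT g = chiT g'),
      chiT (fun _ => 0) = 1 &
      forall g, isPL S T g -> forall u, is_ray S T u ->
        forall delta, is_courant S T u delta ->
        forall h, is_star_restriction S T u g h ->
          chiT g = (chiT (fun x => g x - delta x) + chi_star u h)%R].

(* Unfolding the recursive definition (the star fans of star
   fans of S are the S^T, T \in S, and chi of each is uniquely determined),
   S is Ehrhart iff there is a compatible family of functions chi_{S^T}. *)
Definition ehrhart (S : fan) : Prop :=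
  exists chi : cone -> ('rV[R]_n -> R) -> int,
    forall T, T \in S -> chi_axioms S T (chi T) (fun u => chi (T `|` [fset u])).

End Fans.

(* For a codimension-one cone tau, the star fan Sigma^tau is one-dimensional: its
   rays are the generators u_sigma of the cones sigma = tau + u_sigma.  Its
   Courant functions delta_u are explicit, and since the star fan of each maximal
   cone is a point, the Ehrhart recursion reads chi(f) = chi(f - delta_u) + 1.
   A linear function m vanishing on tau is the combination of the delta_u with
   coefficients <m, u>, while as a class in PL modulo linear functions it is 0;
   hence 1 = chi(0) = chi(m - sum_u <m, u> delta_u) = chi(m) - sum_u <m, u>
   = 1 - <m, sum_u u>.  So every such m kills sum_u u, which therefore lies in
   span(tau) because the generators of tau extend to a lattice basis. *)
From HB Require Import structures.
From mathcomp Require Import all_boot all_order all_algebra.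
From mathcomp Require Import finmap.
From mathcomp Require Import reals.
From mathcomp Require Import boolp classical_sets zify lra.
Set Implicit Arguments. Unset Strict Implicit. Unset Printing Implicit Defensive.
Import Order.TTheory GRing.Theory Num.Theory.
Local Open Scope fset_scope.
Local Open Scope ring_scope.

Section Pairing.
Variables (R : realType) (n : nat).
Local Notation vec := 'rV[int]_n.

Lemma pairZD (m : vec) (x y : 'rV[R]_n) : pairZ m (x + y) = pairZ m x + pairZ m y.
Proof. by rewrite /pairZ -big_split; apply: eq_bigr => i _; rewrite mxE mulrDr. Qed.

Lemma pairZZ (m : vec) (a : R) (x : 'rV[R]_n) : pairZ m (a *: x) = a * pairZ m x.
Proof. by rewrite /pairZ mulr_sumr; apply: eq_bigr => i _; rewrite mxE mulrCA. Qed.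

Lemma pairZ0 (m : vec) : pairZ m (0 : 'rV[R]_n) = 0.
Proof. by rewrite -(scale0r (0 : 'rV[R]_n)) pairZZ mul0r. Qed.

Lemma pairZ_sum (m : vec) (I : Type) (s : seq I) (F : I -> 'rV[R]_n) :
  pairZ m (\sum_(i <- s) F i) = \sum_(i <- s) pairZ m (F i).
Proof. by apply: big_morph; [exact: pairZD | exact: pairZ0]. Qed.

Lemma pair0Z (x : 'rV[R]_n) : pairZ 0 x = 0.
Proof. by rewrite /pairZ big1 // => i _; rewrite mxE mul0r. Qed.

Lemma pairBZ (m1 m2 : vec) (k : int) (x : 'rV[R]_n) :
  pairZ (m1 - k *: m2) x = pairZ m1 x - k%:~R * pairZ m2 x.
Proof.
rewrite /pairZ mulr_sumr -sumrB; apply: eq_bigr => i _.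
by rewrite !mxE intrB intrM mulrBl mulrA.
Qed.

Lemma toRD (u v : vec) : toR R (u + v) = toR R u + toR R v.
Proof. by apply/matrixP => i j; rewrite !mxE intrD. Qed.

Lemma toR0 : toR R (0 : vec) = 0.
Proof. by apply/matrixP => i j; rewrite !mxE. Qed.

Lemma toR_sum (I : Type) (s : seq I) (F : I -> vec) :
  toR R (\sum_(i <- s) F i) = \sum_(i <- s) toR R (F i).
Proof. by apply: big_morph; [exact: toRD | exact: toR0]. Qed.

Definition intZ (m u : vec) : int := \sum_i m 0 i * u 0 i.

Lemma pairZ_toR (m u : vec) : pairZ m (toR R u) = (intZ m u)%:~R.
Proof.
by rewrite /pairZ /intZ rmorph_sum; apply: eq_bigr => i _; rewrite mxE rmorphM.
Qed.

Lemma in_span0 (C : {fset vec}) : in_span C (0 : 'rV[R]_n).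
Proof. by exists (fun _ => 0); rewrite big1 // => u _; rewrite scale0r. Qed.

Lemma in_spanD (C : {fset vec}) (x y : 'rV[R]_n) :
  in_span C x -> in_span C y -> in_span C (x + y).
Proof.
move=> [a ->] [b ->]; exists (fun u => a u + b u).
by rewrite -big_split; apply: eq_bigr => u _; rewrite scalerDl.
Qed.

Lemma in_spanZ (C : {fset vec}) (c : R) (x : 'rV[R]_n) :
  in_span C x -> in_span C (c *: x).
Proof.
move=> [a ->]; exists (fun u => c * a u).
by rewrite scaler_sumr; apply: eq_bigr => u _; rewrite scalerA.
Qed.

Lemma in_span_gen (C : {fset vec}) (u : vec) : u \in C -> in_span C (toR R u).
Proof.
move=> uC; exists (fun t => (t == u)%:R).
rewrite (bigD1_seq u) ?fset_uniq //= eqxx scale1r big1 ?addr0 // => t /negbTE ->.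
by rewrite scale0r.
Qed.

Lemma in_span_combination (I : finType) (C : {fset vec}) (c : I -> R) (f : I -> vec) :
  (forall i, c i != 0 -> f i \in C) -> in_span C (\sum_i c i *: toR R (f i)).
Proof.
move=> fC; apply: (big_ind (in_span C)); [exact: in_span0 | exact: in_spanD|].
move=> i _; have [c0|/fC fiC] := eqVneq (c i) 0.
  by rewrite c0 scale0r; exact: in_span0.
exact/in_spanZ/in_span_gen.
Qed.

Lemma in_cone_span (C : {fset vec}) (x : 'rV[R]_n) : in_cone C x -> in_span C x.
Proof. by move=> [a [_ ->]]; exists a. Qed.

Lemma in_cone0 (C : {fset vec}) : in_cone C (0 : 'rV[R]_n).
Proof. by exists (fun _ => 0); split=> // ; rewrite big1 // => u _; rewrite scale0r. Qed.

Lemma in_coneD (C : {fset vec}) (x y : 'rV[R]_n) :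
  in_cone C x -> in_cone C y -> in_cone C (x + y).
Proof.
move=> [a [a0 ->]] [b [b0 ->]]; exists (fun u => a u + b u); split.
  by move=> u; rewrite addr_ge0.
by rewrite -big_split; apply: eq_bigr => u _; rewrite scalerDl.
Qed.

Lemma in_span_shift_cone (C : {fset vec}) (z : 'rV[R]_n) :
  in_span C z -> exists2 y, in_cone C y & in_cone C (z + y).
Proof.
move=> [c ->]; exists (\sum_(u <- C) `|c u| *: toR R u).
  by exists (fun u => `|c u|); split.
exists (fun u => c u + `|c u|); split.
  by move=> u; have := ler_norm (- c u); rewrite normrN; lra.
by rewrite -big_split; apply: eq_bigr => u _; rewrite scalerDl.
Qed.

Lemma in_cone_fsetU1 (C : {fset vec}) (u : vec) (a : R) (q : 'rV[R]_n) :
  u \notin C -> 0 <= a -> in_cone C q -> in_cone (C `|` [fset u]) (a *: toR R u + q).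
Proof.
move=> uC a0 [c [c0 ->]]; exists (fun t => if t == u then a else c t); split.
  by move=> t; case: eqP.
rewrite fsetUC big_fsetU1 // eqxx; congr (_ + _).
rewrite big_seq [RHS]big_seq; apply: eq_bigr => t tC.
by case: eqP => // tu; move: uC; rewrite -tu tC.
Qed.

Lemma in_cone_fsetU1P (C : {fset vec}) (u : vec) (y : 'rV[R]_n) :
  u \notin C -> in_cone (C `|` [fset u]) y ->
  exists a, [/\ 0 <= a & exists2 q, in_cone C q & y = a *: toR R u + q].
Proof.
move=> uC [a [a0 ->]]; exists (a u); split => //.
by exists (\sum_(t <- C) a t *: toR R t); [exists a | rewrite fsetUC big_fsetU1].
Qed.

Lemma pairZ_span (C : {fset vec}) (m : vec) (x : 'rV[R]_n) :
  vanishes_on R m C -> in_span C x -> pairZ m x = 0.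
Proof.
move=> hm [a ->]; rewrite pairZ_sum big_seq big1 // => u uC.
by rewrite pairZZ hm // mulr0.
Qed.

End Pairing.

Lemma int_affine_step (f : int -> int) :
  (forall k, f k = f (k + 1) + 1) -> forall k, f k = f 0 - k.
Proof.
move=> fS; elim/int_rec => [|k IH|k IH]; first by rewrite subr0.
  by have := fS k; rewrite IH (_ : k%:Z + 1 = k.+1) //; lia.
by have := fS (- (k.+1)%:Z); rewrite (_ : - (k.+1)%:Z + 1 = - k%:Z) ?IH; lia.
Qed.

Section UnimodularDuality.
Variables (R : realType) (n : nat).
Local Notation vec := 'rV[int]_n.

Definition dual_row (B : 'M[int]_n) (i : 'I_n) : vec := \row_k invmx B k i.

Lemma intZ_dual_row (B : 'M[int]_n) (i : 'I_n) (x : vec) :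
  intZ (dual_row B i) x = (x *m invmx B) 0 i.
Proof. by rewrite /intZ mxE; apply: eq_bigr => k _; rewrite mxE mulrC. Qed.

Lemma pairZ_dual_row (B : 'M[int]_n) (i j : 'I_n) : B \in unitmx ->
  pairZ (dual_row B i) (toR R (row j B)) = (j == i)%:R.
Proof.
move=> Bu; rewrite pairZ_toR intZ_dual_row -row_mul mulmxV // !mxE.
by case: (j == i).
Qed.

Lemma toR_row_expansion (B : 'M[int]_n) (x : vec) : B \in unitmx ->
  toR R x = \sum_i ((x *m invmx B) 0 i)%:~R *: toR R (row i B).
Proof.
move=> Bu; rewrite -{1}(mulmxKV Bu x).
apply/matrixP => a k; rewrite (ord1 a) !mxE summxE rmorph_sum.
by apply: eq_bigr => i _; rewrite !mxE rmorphM.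
Qed.

Lemma unimodular_cone_dual (S : {fset {fset vec}}) (C : {fset vec}) (u : vec) :
  unimodular_fan R S -> C \in S -> u \in C ->
  exists m, pairZ m (toR R u) = 1 /\
    forall t, t \in C -> t != u -> pairZ m (toR R t) = 0.
Proof.
move=> [_ _ _ hU] CS uC; have [B [Bu hB]] := hU C CS.
have [i ri] := hB u uC; exists (dual_row B i); split.
  by rewrite -ri pairZ_dual_row // eqxx.
move=> t tC tu; have [j rj] := hB t tC; rewrite -rj pairZ_dual_row //.
by case: eqP => // ji; move: tu; rewrite -rj -ri ji eqxx.
Qed.

Lemma in_span_orthogonal (S : {fset {fset vec}}) (C : {fset vec}) (x : vec) :
  unimodular_fan R S -> C \in S ->
  (forall m, vanishes_on R m C -> pairZ m (toR R x) = 0) -> in_span C (toR R x).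
Proof.
move=> [_ _ _ hU] CS hx; have [B [Bu hB]] := hU C CS.
rewrite (toR_row_expansion x Bu); apply: in_span_combination => i.
apply: contraNT => rowC; rewrite intr_eq0 -intZ_dual_row -(intr_eq0 R) -pairZ_toR.
apply/eqP/hx => t tC; have [j rj] := hB t tC; rewrite -rj pairZ_dual_row //.
by case: eqP => // ji; move: rowC; rewrite -ji rj tC.
Qed.

End UnimodularDuality.

Section PiecewiseLinear.
Variables (R : realType) (n : nat) (S : {fset {fset 'rV[int]_n}}) (T : {fset 'rV[int]_n}).

Lemma isPL0 : isPL S T (fun _ : 'rV[R]_n => 0).
Proof.
move=> C _ _; exists 0; split; first by move=> s _; rewrite pair0Z.
by move=> y z _ _; rewrite pair0Z.
Qed.

Lemma isPL_subZ (g f : 'rV[R]_n -> R) (k : int) :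
  isPL S T g -> isPL S T f -> isPL S T (fun x => g x - k%:~R * f x).
Proof.
move=> hg hf C CS TC.
have [m1 [h1 e1]] := hg C CS TC; have [m2 [h2 e2]] := hf C CS TC.
exists (m1 - k *: m2); split.
  by move=> s sT; rewrite pairBZ h1 // h2 // mulr0 subr0.
by move=> y z yc zs; rewrite e1 // e2 // pairBZ.
Qed.

End PiecewiseLinear.

Section OneDimensionalStar.
Variables (R : realType) (n : nat) (S : {fset {fset 'rV[int]_n}}) (tau : {fset 'rV[int]_n}).
Local Notation vec := 'rV[int]_n.
Hypothesis fanS : unimodular_fan R S.
Hypothesis tau_codim1 : forall C, C \in S -> (#|` C| <= (#|` tau|).+1)%N.

Lemma star_cone_cases (C : {fset vec}) : C \in S -> tau `<=` C ->
  C = tau \/ exists2 v, is_ray S tau v & C = tau `|` [fset v].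
Proof.
move=> CS tC; have [E|E] := eqVneq (C `\` tau) fset0.
  by left; apply/eqP; rewrite eqEfsubset tC andbT -fsetD_eq0 E.
right; have /cardfs1P [v Ev] : #|` C `\` tau| == 1%N.
  have := tau_codim1 CS; move: E; rewrite -cardfs_gt0 (cardfsDS tC).
  by have := fsubset_leq_card tC; lia.
have : v \in C `\` tau by rewrite Ev in_fset1.
rewrite in_fsetD => /andP [vtau vC].
suff eqC : C = tau `|` [fset v] by exists v => //; split => //; rewrite -eqC.
apply/fsetP => x; have := congr1 (fun A => x \in A) Ev.
rewrite /= in_fsetD in_fsetU !in_fset1.
by case xt: (x \in tau) => //=; rewrite (fsubsetP tC x xt).
Qed.

Lemma card_ray_cone (v : vec) : is_ray S tau v -> #|` tau `|` [fset v]| = (#|` tau|).+1.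
Proof. by move=> [vt _]; rewrite fsetUC cardfsU1 vt. Qed.

Lemma ray_cone_maximal (v : vec) (C : {fset vec}) :
  is_ray S tau v -> C \in S -> tau `|` [fset v] `<=` C -> C = tau `|` [fset v].
Proof.
move=> rv CS sub; apply/esym/eqP.
by rewrite eqEfcard sub card_ray_cone // tau_codim1.
Qed.

Lemma ray_dual (v : vec) : is_ray S tau v ->
  exists m, vanishes_on R m tau /\ pairZ m (toR R v) = 1.
Proof.
move=> [vt vS]; have vin : v \in tau `|` [fset v] by rewrite in_fsetU in_fset1 eqxx orbT.
have [m [m1 m0]] := unimodular_cone_dual fanS vS vin.
exists m; split => // t tt; apply: m0; first by rewrite in_fsetU tt.
by apply: contraNneq vt => <-.
Qed.

Lemma ray_coef_unique (v : vec) (a a' : R) (z z' : 'rV[R]_n) :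
  is_ray S tau v -> in_span tau z -> in_span tau z' ->
  a *: toR R v + z = a' *: toR R v + z' -> a = a'.
Proof.
move=> rv hz hz'; have [m [hm m1]] := ray_dual rv.
move/(congr1 (pairZ m)); rewrite !pairZD !pairZZ m1 !(pairZ_span hm) //.
by rewrite !mulr1 !addr0.
Qed.

(* The two maximal cones meet only in tau, so their translates by span(tau)
   meet only in span(tau). *)
Lemma distinct_rays_separated (v w : vec) (a b : R) (z z' : 'rV[R]_n) :
  is_ray S tau v -> is_ray S tau w -> v != w -> 0 < a -> 0 < b ->
  in_span tau z -> in_span tau z' -> a *: toR R w + z <> b *: toR R v + z'.
Proof.
move=> rv rw vw a0 b0 hz hz' E.
have [y1 y1C zy1] := in_span_shift_cone hz.
have [y2 y2C zy2] := in_span_shift_cone hz'.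
pose p := a *: toR R w + (z + y1 + y2).
have pw : in_cone (tau `|` [fset w]) p.
  by apply: in_cone_fsetU1 (proj1 rw) (ltW a0) (in_coneD zy1 y2C).
have pv : in_cone (tau `|` [fset v]) p.
  have -> : p = b *: toR R v + (z' + y2 + y1).
    by rewrite /p !addrA E -!addrA [y1 + y2]addrC.
  exact: in_cone_fsetU1 (proj1 rv) (ltW b0) (in_coneD zy2 y1C).
have [_ _ meet _] := fanS.
have := meet _ _ (proj2 rw) (proj2 rv) p pw pv.
have -> : (tau `|` [fset w]) `&` (tau `|` [fset v]) = tau.
  apply/fsetP => x; rewrite in_fsetI !in_fsetU !in_fset1.
  case: (x \in tau) => //=; case: eqP => // ->.
  by rewrite eq_sym (negbTE vw).
move=> /in_cone_span hp.
have hzy : in_span tau (z + y1 + y2).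
  exact: in_spanD (in_spanD hz (in_cone_span y1C)) (in_cone_span y2C).
have := ray_coef_unique (a := a) (a' := 0) rw hzy hp.
rewrite scale0r add0r => /(_ erefl) a00.
by move: a0; rewrite a00 ltxx.
Qed.

(* On cone(w) + span(tau) this is the coefficient of [w]; it vanishes elsewhere. *)
Definition courant (w : vec) (x : 'rV[R]_n) : R :=
  xget 0 (fun a => 0 <= a /\ exists2 z, in_span tau z & x = a *: toR R w + z).

Lemma courantE (w v : vec) (a : R) (z : 'rV[R]_n) :
  is_ray S tau w -> is_ray S tau v -> 0 <= a -> in_span tau z ->
  courant w (a *: toR R v + z) = if v == w then a else 0.
Proof.
move=> rw rv a0 hz; rewrite /courant; have [<-{w rw}|vw] := eqVneq v w.
  apply: xget_unique; first by split => //; exists z.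
  by move=> a' [_ [z' hz' E]]; apply: ray_coef_unique rv hz' hz (esym E).
case: xgetP => // a' _ [a'0 [z' hz' E]].
have [//|a'n0] := eqVneq a' 0; have a'p : 0 < a' by rewrite lt0r a'n0.
have [a00|an0] := eqVneq a 0.
  move: E; rewrite a00 scale0r add0r => E.
  have := ray_coef_unique (a := 0) (a' := a') rw hz hz'.
  by rewrite scale0r add0r => /(_ E) a'0'; move: a'n0; rewrite -a'0' eqxx.
have ap : 0 < a by rewrite lt0r an0.
by have := distinct_rays_separated rv rw vw a'p ap hz' hz (esym E).
Qed.

Lemma courant_span (w : vec) (z : 'rV[R]_n) :
  is_ray S tau w -> in_span tau z -> courant w z = 0.
Proof. by move=> rw hz; have := courantE rw rw (lexx 0) hz; rewrite scale0r add0r eqxx. Qed.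

Lemma courant_ray (w v : vec) : is_ray S tau w -> is_ray S tau v ->
  courant w (toR R v) = (v == w)%:R.
Proof.
move=> rw rv; have := courantE rw rv ler01 (in_span0 R tau).
by rewrite scale1r addr0 => ->; case: eqP.
Qed.

Lemma isPL_courant (w : vec) : is_ray S tau w -> isPL S tau (courant w).
Proof.
move=> rw C CS tC.
have [->|[v rv ->]] := star_cone_cases CS tC.
  exists 0; split => [s _|y z yc zs]; rewrite pair0Z //.
  exact/courant_span/in_spanD/zs/in_cone_span.
have [m [hm m1]] : exists m, vanishes_on R m tau /\ pairZ m (toR R v) = (v == w)%:R.
  have [_|_] := eqVneq v w; first exact: ray_dual.
  by exists 0; split => [s _|]; rewrite pair0Z.
exists m; split => // y z yc zs.
have [a [a0 [q qc ->]]] := in_cone_fsetU1P (proj1 rv) yc.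
have qz := in_spanD (in_cone_span qc) zs.
rewrite -addrA (courantE rw rv a0 qz) pairZD pairZZ m1 (pairZ_span hm qz).
by case: eqP; rewrite ?mulr1 ?mulr0 addr0.
Qed.

Lemma courant_is_courant (w : vec) : is_ray S tau w -> is_courant S tau w (courant w).
Proof.
move=> rw; split; [exact: isPL_courant | by rewrite courant_ray // eqxx |].
by move=> v rv /negbTE vw; rewrite courant_ray // vw.
Qed.

(* The star fan of a maximal cone is a point, so 0 represents every [g]^u. *)
Lemma star_restriction0 (u : vec) (g : 'rV[R]_n -> R) :
  isPL S tau g -> is_ray S tau u -> is_star_restriction S tau u g (fun _ => 0).
Proof.
move=> hg ru; split; first exact: isPL0.
have [m [hm eg]] := hg _ (proj2 ru) (fsubsetUl _ _).
have gE x : in_cone (tau `|` [fset u]) x -> g x = pairZ m x.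
  by move=> xc; rewrite -[x]addr0 eg //; exact: in_span0.
exists m; split => //.
  rewrite gE // -[toR R u]addr0 -[toR R u]scale1r.
  exact: in_cone_fsetU1 (proj1 ru) ler01 (in_cone0 R tau).
by move=> C CS sub x; rewrite (ray_cone_maximal ru CS sub) => /gE ->; rewrite subrr.
Qed.

Lemma pairZ_courant_expansion (U : seq vec) (m : vec) (x : 'rV[R]_n) :
  uniq U -> (forall w, w \in U <-> is_ray S tau w) ->
  vanishes_on R m tau -> star_support S tau x ->
  pairZ m x = \sum_(w <- U) (intZ m w)%:~R * courant w x.
Proof.
move=> Uu rayU hm [C [CS tC [y [z [yc zs ->]]]]].
have [Ct|[v rv Cv]] := star_cone_cases CS tC.
  rewrite Ct in yc; have yz := in_spanD (in_cone_span yc) zs.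
  rewrite (pairZ_span hm yz) big_seq big1 // => w /rayU rw.
  by rewrite courant_span // mulr0.
rewrite Cv in yc; have [a [a0 [q qc ->]]] := in_cone_fsetU1P (proj1 rv) yc.
have qz := in_spanD (in_cone_span qc) zs.
rewrite -addrA pairZD pairZZ (pairZ_span hm qz) addr0 pairZ_toR mulrC.
rewrite (eq_big_seq (fun w => (intZ m w)%:~R * (if v == w then a else 0))); last first.
  by move=> w /rayU rw; rewrite courantE.
rewrite (bigD1_seq v) ?(rayU v).2 //= eqxx big1 ?addr0 // => w wv.
by rewrite eq_sym (negbTE wv) mulr0.
Qed.

(* The ray of a maximal cone [sigma] containing [tau]; junk outside such cones. *)
Definition cone_ray (sigma : {fset vec}) : vec := head 0 (sigma `\` tau : seq vec).

Lemma fsetU1D (v : vec) : v \notin tau -> (tau `|` [fset v]) `\` tau = [fset v].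
Proof.
move=> vt; apply/fsetP => x; rewrite in_fsetD in_fsetU !in_fset1.
by case: eqP => [->|_]; rewrite ?orbT ?orbF ?vt ?andNb.
Qed.

Lemma cone_ray_fsetU1 (v : vec) : v \notin tau -> cone_ray (tau `|` [fset v]) = v.
Proof. by move=> vt; rewrite /cone_ray fsetU1D // -fset_seq1. Qed.

Lemma maximal_star_cone (sigma : {fset vec}) :
  sigma \in S -> #|` sigma| = (#|` tau|).+1 -> tau `<=` sigma ->
  is_ray S tau (cone_ray sigma) /\ sigma = tau `|` [fset cone_ray sigma].
Proof.
move=> sS sd ts; have [st|[v rv ->]] := star_cone_cases sS ts.
  by move: sd; rewrite st; lia.
by rewrite cone_ray_fsetU1 //; case: rv.
Qed.

Lemma star_rays_enum : exists U : seq vec,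
  [/\ uniq U, forall w, w \in U <-> is_ray S tau w &
      \sum_(sigma <- S | (#|` sigma| == (#|` tau|).+1) && (tau `<=` sigma))
        \sum_(u <- sigma `\` tau) u = \sum_(w <- U) w].
Proof.
pose F : seq {fset vec} := [seq sigma <- S | (#|` sigma| == (#|` tau|).+1) && (tau `<=` sigma)].
have FP (sigma : {fset vec}) : sigma \in F ->
    is_ray S tau (cone_ray sigma) /\ sigma = tau `|` [fset cone_ray sigma].
  by rewrite mem_filter => /andP [/andP [/eqP sd ts] sS]; exact: maximal_star_cone.
exists (map cone_ray F); split.
- rewrite map_inj_in_uniq ?filter_uniq ?fset_uniq // => s1 s2 /FP [_ E1] /FP [_ E2].
  by move=> e; rewrite E1 E2 e.
- move=> w; split => [/mapP [sigma /FP [rs _] ->] //|rw].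
  apply/mapP; exists (tau `|` [fset w]); last by rewrite cone_ray_fsetU1 //; case: rw.
  by rewrite mem_filter card_ray_cone // eqxx fsubsetUl (proj2 rw).
- rewrite -big_filter big_map big_seq [RHS]big_seq; apply: eq_bigr => sigma /FP [rs E].
  by rewrite {1}E fsetU1D ?big_seq_fset1 //; case: rs.
Qed.

Section EhrhartRecursion.
Hypothesis tauS : tau \in S.
Variable chi : {fset vec} -> ('rV[R]_n -> R) -> int.
Hypothesis chiS : forall T, T \in S -> chi_axioms S T (chi T) (fun u => chi (T `|` [fset u])).

Lemma chi_PL_equiv0 (g : 'rV[R]_n -> R) :
  isPL S tau g -> PL_equiv S tau g (fun _ => 0) -> chi tau g = 1.
Proof. by have [resp <- _] := chiS tauS; move=> hg /resp; apply => //; exact: isPL0. Qed.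

Lemma chi_subr_courant (g : 'rV[R]_n -> R) (u : vec) :
  isPL S tau g -> is_ray S tau u -> chi tau g = chi tau (fun x => g x - courant u x) + 1.
Proof.
move=> hg ru; have [_ _ rec] := chiS tauS.
rewrite (rec g hg u ru _ (courant_is_courant ru) _ (star_restriction0 hg ru)).
by have [_ -> _] := chiS (proj2 ru).
Qed.

Lemma chi_subr_zcourant (g : 'rV[R]_n -> R) (u : vec) (k : int) :
  isPL S tau g -> is_ray S tau u ->
  chi tau (fun x => g x - k%:~R * courant u x) = chi tau g - k.
Proof.
move=> hg ru; pose f k := chi tau (fun x => g x - k%:~R * courant u x).
have f0 : f 0 = chi tau g by congr (chi tau); apply: funext => x; rewrite mul0r subr0.
rewrite -/(f k) -f0; apply: int_affine_step => {}k.
rewrite /f (chi_subr_courant _ ru); last by apply: isPL_subZ => //; exact: isPL_courant.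
by congr (chi tau _ + 1); apply: funext => x; rewrite intrD mulrDl mul1r opprD addrA.
Qed.

Lemma isPL_subr_courant_sum (U : seq vec) (k : vec -> int) (g : 'rV[R]_n -> R) :
  (forall w, w \in U -> is_ray S tau w) -> isPL S tau g ->
  isPL S tau (fun x => g x - \sum_(w <- U) (k w)%:~R * courant w x).
Proof.
elim: U g => [|w U IH] g rU hg.
  by under [fun x => _]funext do rewrite big_nil subr0.
under [fun x => _]funext do rewrite big_cons opprD addrA.
apply: (IH (fun x => g x - (k w)%:~R * courant w x)).
  by move=> v vU; apply: rU; rewrite in_cons vU orbT.
by apply: isPL_subZ => //; apply/isPL_courant/rU; rewrite mem_head.
Qed.

Lemma chi_subr_courant_sum (U : seq vec) (k : vec -> int) (g : 'rV[R]_n -> R) :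
  (forall w, w \in U -> is_ray S tau w) -> isPL S tau g ->
  chi tau (fun x => g x - \sum_(w <- U) (k w)%:~R * courant w x) =
  chi tau g - \sum_(w <- U) k w.
Proof.
elim: U g => [|w U IH] g rU hg.
  by rewrite big_nil subr0; congr (chi tau); apply: funext => x; rewrite big_nil subr0.
have rw : is_ray S tau w by apply: rU; rewrite mem_head.
have rU' v : v \in U -> is_ray S tau v by move=> vU; apply: rU; rewrite in_cons vU orbT.
under [fun x => _]funext do rewrite big_cons opprD addrA.
rewrite IH //; last by apply: isPL_subZ => //; exact: isPL_courant.
by rewrite chi_subr_zcourant // big_cons opprD addrA.
Qed.

Lemma sum_ray_pairings_eq0 (U : seq vec) (m : vec) :
  uniq U -> (forall w, w \in U <-> is_ray S tau w) -> vanishes_on R m tau ->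
  \sum_(w <- U) intZ m w = 0.
Proof.
move=> Uu rayU hm; have rU w : w \in U -> is_ray S tau w := (rayU w).1.
have hm_PL : isPL S tau (@pairZ R n m) by move=> C _ _; exists m.
have chi_m : chi tau (@pairZ R n m) = 1.
  by apply: chi_PL_equiv0 => //; exists m; split => // x _; rewrite subr0.
have := chi_subr_courant_sum (intZ m) rU hm_PL; rewrite chi_m chi_PL_equiv0.
- by move/eqP; rewrite eq_sym subr_eq addrC -subr_eq subrr eq_sym => /eqP.
- exact: isPL_subr_courant_sum.
exists 0; split => [s _|x xS]; rewrite ?pair0Z // subr0.
by rewrite -(pairZ_courant_expansion Uu rayU hm xS) subrr.
Qed.

End EhrhartRecursion.

End OneDimensionalStar.

Theorem corollary3 (R : realType) (n : nat) (Sigma : {fset {fset 'rV[int]_n}})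
    (d : nat) :
  unimodular_fan R Sigma -> ehrhart R Sigma -> fan_dim Sigma d ->
  forall tau : {fset 'rV[int]_n}, tau \in Sigma -> (#|` tau|).+1 = d ->
  @in_span R n tau
    (@toR R n (\sum_(sigma <- Sigma | (#|` sigma| == d) && (tau `<=` sigma))
              \sum_(u <- sigma `\` tau) u)).
Proof.
move=> fanS [chi chiS] [_ dimS] tau tauS dE; subst d.
have [U [Uu rayU ->]] := star_rays_enum dimS.
apply: (in_span_orthogonal fanS tauS) => m hm.
rewrite toR_sum pairZ_sum (eq_bigr _ (fun w _ => pairZ_toR R m w)) -rmorph_sum.
by rewrite (sum_ray_pairings_eq0 fanS dimS tauS chiS Uu rayU hm).
Qed.
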